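(* Let $D$ be an integral domain with an identity element and let $\varphi$ be the canonical homomorphism of $D_{mult}$ onto $D'=D_{mult}/\sim$. For every ideal $I$ of $D_{mult}$, $\varphi(\mathrm{Sep}\,I)=\mathrm{Sep}(\varphi(I))$.
   Context: $D_{mult}$ is the multiplicative semigroup of $D$ and $\sim$ the associate congruence. For a subset $A$ of a semigroup $S$: $\mathrm{Id}\,A=\{x\in S: xA\subseteq A,\ Ax\subseteq A\}$ and $\mathrm{Sep}\,A=\mathrm{Id}\,A\cap\mathrm{Id}(S\setminus A)$; $\mathrm{Sep}\,I$ is taken in $D_{mult}$, and $\mathrm{Sep}(\varphi(I))$ in $D'$. *)

From HB Require Import structures.
From mathcomp Require Import all_boot all_algebra.
From mathcomp Require Import boolp classical_sets.
Set Implicit Arguments. Unset Strict Implicit. Unset Printing Implicit Defensive.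
Import GRing.Theory.
Local Open Scope ring_scope.
Local Open Scope classical_set_scope.
Local Open Scope quotient_scope.

Definition IdS (S : Type) (op : S -> S -> S) (A : set S) : set S :=
  [set x | forall a, A a -> A (op x a) /\ A (op a x)].

Definition SepS (S : Type) (op : S -> S -> S) (A : set S) : set S :=
  IdS op A `&` IdS op (~` A).

Definition is_sg_ideal (S : Type) (op : S -> S -> S) (I : set S) : Prop :=
  forall x a, I a -> I (op x a) /\ I (op a x).

Section Assoc.
Variable D : idomainType.

Definition assocP (a b : D) : Prop := exists2 u : D, u \is a GRing.unit & a = u * b.
Definition assoc : rel D := fun a b => `[< assocP a b >].

Lemma assoc_refl : reflexive assoc.
Proof. by move=> a; apply/asboolP; exists 1; rewrite ?unitr1 ?mul1r. Qed.

Lemma assoc_sym : symmetric assoc.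
Proof.
suff H : forall a b, assoc a b -> assoc b a.
  by move=> a b; apply/idP/idP; apply: H.
move=> a b /asboolP [u Uu ->]; apply/asboolP; exists u^-1; rewrite ?unitrV //.
by rewrite mulrA mulVr ?mul1r.
Qed.

Lemma assoc_trans : transitive assoc.
Proof.
move=> b a c /asboolP [u Uu ->] /asboolP [v Uv ->]; apply/asboolP.
by exists (u * v); rewrite ?unitrM ?Uu ?Uv // mulrA.
Qed.

Definition assoc_equiv : equiv_rel D := EquivRel assoc assoc_refl assoc_sym assoc_trans.

Definition Dquot := {eq_quot assoc_equiv}.

Definition phi : D -> Dquot := \pi_Dquot.

(* multiplication on D' induced by that of D (well defined since ~ is a
   congruence): [a][b] = [ab] *)
Definition Dquot_mul (x y : Dquot) : Dquot := phi (repr x * repr y).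

End Assoc.

From HB Require Import structures.
From mathcomp Require Import all_boot all_algebra.
From mathcomp Require Import boolp classical_sets.
Local Open Scope classical_set_scope.
Local Open Scope quotient_scope.
Set Implicit Arguments. Unset Strict Implicit.
Import GRing.Theory.
Local Open Scope ring_scope.

(* Idea: phi is a surjective semigroup morphism, and an ideal I is saturated
   for ~ (multiplying by a unit stays in I), so I = phi^-1(phi I).  Preimages
   under a surjective morphism commute with Id, hence with Sep, and taking
   images undoes the preimage. *)

Section SurjectiveMorphism.
Variables (S T : Type) (opS : S -> S -> S) (opT : T -> T -> T).
Variables (f : S -> T) (g : T -> S).
Hypothesis fK : cancel g f.
Hypothesis f_morph : forall x y, f (opS x y) = opT (f x) (f y).

Lemma preimage_IdS (B : set T) : f @^-1` IdS opT B = IdS opS (f @^-1` B).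
Proof.
apply/seteqP; split=> x /= Hx.
  by move=> a Ba; rewrite /preimage /= !f_morph; exact: Hx.
by move=> b Bb; have := Hx (g b); rewrite /preimage /= !f_morph fK; apply.
Qed.

Lemma preimage_SepS (B : set T) : f @^-1` SepS opT B = SepS opS (f @^-1` B).
Proof. by rewrite /SepS preimage_setI !preimage_IdS preimage_setC. Qed.

Lemma image_SepS_preimage (B : set T) :
  f @` SepS opS (f @^-1` B) = SepS opT B.
Proof.
rewrite -preimage_SepS image_preimage //.
by apply/seteqP; split=> // y _; exists (g y); rewrite ?fK.
Qed.

End SurjectiveMorphism.

Section AssociateQuotient.
Variable D : idomainType.

Lemma phi_eqP (a b : D) : reflect (phi a = phi b) (assoc a b).
Proof. exact: eqmodP. Qed.

Lemma assoc_phi (a : D) : assoc (repr (phi a)) a.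
Proof. by apply/phi_eqP; rewrite /phi reprK. Qed.

Lemma phi_repr (x : Dquot D) : phi (repr x) = x.
Proof. exact: reprK. Qed.

Lemma assocM (a a' b b' : D) : assoc a a' -> assoc b b' -> assoc (a * b) (a' * b').
Proof.
move=> /asboolP [u Uu ->] /asboolP [v Uv ->]; apply/asboolP.
by exists (u * v); rewrite ?unitrM ?Uu ?Uv // mulrACA.
Qed.

Lemma phiM (a b : D) : phi (a * b) = Dquot_mul (phi a) (phi b).
Proof. by apply/phi_eqP; rewrite assoc_sym assocM ?assoc_phi. Qed.

Lemma ideal_assoc_closed (I : set D) (a b : D) :
  is_sg_ideal (@GRing.mul D) I -> assoc a b -> I b -> I a.
Proof. by move=> HI /asboolP [u _ ->] /(HI u) []. Qed.

Lemma preimage_image_ideal (I : set D) :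
  is_sg_ideal (@GRing.mul D) I -> (@phi D) @^-1` ((@phi D) @` I) = I.
Proof.
move=> HI; apply/seteqP; split=> [a [b Ib /phi_eqP ab] | a Ia]; last by exists a.
by apply: ideal_assoc_closed HI _ Ib; rewrite assoc_sym.
Qed.

End AssociateQuotient.

Theorem lemma4 (D : idomainType) (I : set D) :
  is_sg_ideal (@GRing.mul D) I ->
  (@phi D) @` (SepS (@GRing.mul D) I) = SepS (@Dquot_mul D) ((@phi D) @` I).
Proof.
move=> HI; rewrite -{1}(preimage_image_ideal HI).
exact: (image_SepS_preimage (@phi_repr D) (@phiM D)).
Qed.
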